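(* Let $C\subseteq\mathbb{R}^d$ be a compact set with a system of balls $\{S_I\}_I$ for which there is $r\in(0,\tfrac13]$ such that $\tau(C,\{S_I\}_I)\ge\frac1{1-2r}$ and $\{S_I\}_I$ is $r$-uniformly dense. Then there is $a>0$, depending only on $r$ and $\operatorname{rad}(S_\emptyset)$, such that for every unit vector $v$, $[0,a]\subseteq\Delta_v(C)$.
   Context: $\mathbb{R}^d$ carries a distance $\operatorname{dist}$ induced by a norm; balls are closed. A system of balls for a compact set $C$ is a family $\{S_I\}_I$ of closed balls indexed by finite words with each $S_I$ containing its finitely many children $S_{I,j}$, $C=\bigcap_{n\ge0}\bigcup_{\ell(I)=n}S_I$, and radii tending to $0$ along every infinite branch. $h_I:=\max_{x\in S_I}\operatorname{dist}(x,C)$; thickness $\tau(C,\{S_I\}_I):=\inf_I\frac{\min_i\operatorname{rad}(S_{I,i})}{h_I}$. The system is $r$-uniformly dense if for every $I$ and every ball $B\subseteq S_I$ with $\operatorname{rad}(B)\ge r\operatorname{rad}(S_I)$ there is a child $S_{I,i}\subseteq B$. For a unit vector $v$, $\Delta_v(C)$ is the set of $t\in\mathbb{R}$ such that there are $e_1,e_2\in C$ with $e_1-e_2=tv$ (equivalently $C\cap(C+tv)\ne\emptyset$). *)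

(* R : realType, R^d = 'rV[R]_d. *)
From HB Require Import structures.
From mathcomp Require Import all_boot all_order all_algebra.
From mathcomp Require Import all_classical all_reals all_analysis.
Set Implicit Arguments. Unset Strict Implicit. Unset Printing Implicit Defensive.
Import Order.TTheory GRing.Theory Num.Theory numFieldNormedType.Exports.
Local Open Scope classical_set_scope.
Local Open Scope ring_scope.

Definition is_norm (R : realType) (d : nat) (N : 'rV[R]_d -> R) : Prop :=
  [/\ forall x y, N (x + y) <= N x + N y,
      forall (a : R) x, N (a *: x) = `|a| * N x
    & forall x, N x = 0 -> x = 0].

Definition cball (R : realType) (d : nat) (N : 'rV[R]_d -> R)
  (c : 'rV[R]_d) (rho : R) : set 'rV[R]_d := [set x | N (x - c) <= rho].

(* A ball is given by (center, radius); balls have positive radius. *)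
Definition ballset (R : realType) (d : nat) (N : 'rV[R]_d -> R)
  (B : 'rV[R]_d * R) : set 'rV[R]_d := cball N B.1 B.2.

(* Words of the tree: nch I = number of children of the node I;
   the children of I are the words rcons I j for j < nch I. *)
Inductive valid_word (nch : seq nat -> nat) : seq nat -> Prop :=
| valid_nil : valid_word nch [::]
| valid_rcons I j : valid_word nch I -> (j < nch I)%N -> valid_word nch (rcons I j).

Definition distC (R : realType) (d : nat) (N : 'rV[R]_d -> R)
  (C : set 'rV[R]_d) (x : 'rV[R]_d) : R := inf [set N (x - e) | e in C].

Definition hI (R : realType) (d : nat) (N : 'rV[R]_d -> R)
  (C : set 'rV[R]_d) (B : 'rV[R]_d * R) : R :=
  sup [set distC N C x | x in ballset N B].

Definition system_of_balls (R : realType) (d : nat) (N : 'rV[R]_d -> R)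
  (C : set 'rV[R]_d) (S : seq nat -> 'rV[R]_d * R) (nch : seq nat -> nat) : Prop :=
  [/\ (forall I, valid_word nch I -> 0 < (S I).2),
      (forall I j, valid_word nch I -> (j < nch I)%N ->
         ballset N (S (rcons I j)) `<=` ballset N (S I)),
      C = \bigcap_(n in [set: nat])
            \bigcup_(I in [set I | valid_word nch I /\ size I = n]) ballset N (S I)
    & (forall f : nat -> nat, (forall n, (f n < nch (mkseq f n))%N) ->
         (S (mkseq f n)).2 @[n --> \oo] --> (0 : R))].

(* tau(C, {S_I}) >= t, i.e. inf_I (min_i rad S_{I,i}) / h_I >= t,
   unfolded as: for every node I and child i, t * h_I <= rad S_{I,i}
   (ratios with h_I = 0 count as +oo, min over no children as +oo). *)
Definition thickness_ge (R : realType) (d : nat) (N : 'rV[R]_d -> R)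
  (C : set 'rV[R]_d) (S : seq nat -> 'rV[R]_d * R) (nch : seq nat -> nat) (t : R) : Prop :=
  forall I j, valid_word nch I -> (j < nch I)%N ->
    t * hI N C (S I) <= (S (rcons I j)).2.

Definition uniformly_dense (R : realType) (d : nat) (N : 'rV[R]_d -> R)
  (S : seq nat -> 'rV[R]_d * R) (nch : seq nat -> nat) (r : R) : Prop :=
  forall I (B : 'rV[R]_d * R), valid_word nch I -> 0 < B.2 ->
    ballset N B `<=` ballset N (S I) -> r * (S I).2 <= B.2 ->
    exists2 j, (j < nch I)%N & ballset N (S (rcons I j)) `<=` ballset N B.

Definition Delta (R : realType) (d : nat) (C : set 'rV[R]_d) (v : 'rV[R]_d) : set R :=
  [set t | exists e1 e2, [/\ C e1, C e2 & e1 - e2 = t *: v]].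

From HB Require Import structures.
From mathcomp Require Import all_boot all_order all_algebra.
From mathcomp Require Import all_classical all_reals all_analysis.
From mathcomp Require Import ring lra.
Import Order.TTheory GRing.Theory Num.Theory numFieldNormedType.Exports.
Local Open Scope classical_set_scope.
Local Open Scope ring_scope.

Set Implicit Arguments. Unset Strict Implicit. Unset Printing Implicit Defensive.

(* Fix t in [0, (1 - 2r)(1 - r) rad S_0].  Keep a node P, a point y of C and w = +- t v with
   y + w within (1 - 2r) rad S_P of the center of S_P.  Around y take the tree ball S_(Vj) at the
   scale 2 r rad S_P.  If h_P <= (1 - 2r) rad S_(Vj), a point x of C near the center of S_(Vj)
   shifted by w continues the chain as (Vj, x, -w).  Otherwise uniform density puts a child
   S_(Pi) inside both the ball of radius 2 r rad S_P around y + w and S_V + w; then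
   h_V < h_P <= (1 - 2r) rad S_(Pi), so a point of C near the center of S_(Pi) shifted by -w
   continues it as (Pi, _, w).  Radii shrink by the factor 2 r < 1, so y + w comes arbitrarily
   close to C, and compactness of C gives e1 - e2 = t v. *)

Section Norm.
Variables (R : realType) (d : nat) (N : 'rV[R]_d -> R).
Hypothesis hN : is_norm N.

Lemma nrmD x y : N (x + y) <= N x + N y. Proof. by case: hN. Qed.

Lemma nrmZ (a : R) x : N (a *: x) = `|a| * N x. Proof. by case: hN. Qed.

Lemma nrm_eq0 x : N x = 0 -> x = 0. Proof. by case: hN => _ _; apply. Qed.

Lemma nrm0 : N 0 = 0.
Proof. by have := nrmZ 0 (0 : 'rV[R]_d); rewrite scale0r normr0 mul0r. Qed.

Lemma nrmN x : N (- x) = N x.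
Proof. by rewrite -scaleN1r nrmZ normrN normr1 mul1r. Qed.

Lemma nrm_ge0 x : 0 <= N x.
Proof. by have := nrmD x (- x); rewrite subrr nrm0 nrmN; lra. Qed.

Lemma nrmB x y : N (x - y) = N (y - x).
Proof. by rewrite -nrmN opprB. Qed.

Lemma nrm_triangle x y z : N (x - z) <= N (x - y) + N (y - z).
Proof. by have := nrmD (x - y) (y - z); rewrite addrA subrK. Qed.

Lemma nrm_lipschitz x y : `|N x - N y| <= N (x - y).
Proof.
have := nrm_triangle y x 0; have := nrm_triangle x y 0.
rewrite !subr0 (nrmB y x) ler_norml; lra.
Qed.

Lemma nrm_le_mx_norm : exists2 K : R, 0 < K & forall x, N x <= K * `|x|.
Proof.
pose K := \sum_(i < d) N (delta_mx 0 i).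
have K0 : 0 <= K by apply: sumr_ge0 => i _; exact: nrm_ge0.
exists (1 + K) => [|x]; first lra.
suff : N x <= K * `|x| by have := normr_ge0 x; lra.
rewrite {1}(matrix_sum_delta x) big_ord1.
have sumD (F : 'I_d -> 'rV[R]_d) : N (\sum_i F i) <= \sum_i N (F i).
  elim/big_ind2: _ => [|a b c e hab hce|//]; first by rewrite nrm0.
  exact: le_trans (nrmD b e) (lerD hab hce).
apply: le_trans (sumD _) _; rewrite /K mulr_suml.
apply: ler_sum => i _; rewrite nrmZ mulrC ler_wpM2l ?nrm_ge0 //.
by rewrite [`|x|]mx_normrE; apply/bigmax_geP; right; exists (ord0, i).
Qed.

Lemma nrm_continuous : continuous N.
Proof.
have [K K0 hK] := nrm_le_mx_norm => x.
apply/(@cvgrPdist_le _ _ _ (nbhs x) (nbhs_filter x)) => e e0.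
have eK : 0 < e / K by rewrite divr_gt0.
have := @cvgr_dist_le _ _ _ (nbhs x) (nbhs_filter x) id x (@cvg_id _ (nbhs x)) _ eK.
apply: filterS => y hy.
apply: le_trans (nrm_lipschitz x y) _; apply: le_trans (hK _) _.
by rewrite mulrC -ler_pdivlMr.
Qed.

Lemma continuous_nrmB (T : topologicalType) (f g : T -> 'rV[R]_d) :
  continuous f -> continuous g -> continuous (fun x => N (f x - g x)).
Proof.
move=> fc gc x; apply: (@continuous_comp _ _ _ (f - g)); last exact: nrm_continuous.
exact: continuousB (fc x) (gc x).
Qed.

(* The hypothesis [u != 0] only makes the unit sphere nonempty. *)
Lemma nrm_ge_mx_norm (u : 'rV[R]_d) : u != 0 ->
  exists2 m : R, 0 < m & forall x, m * `|x| <= N x.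
Proof.
move=> u0; pose S := [set x : 'rV[R]_d | `|x| = 1].
have Sc : compact S.
  apply: bounded_closed_compact.
    exists 1; split; first by rewrite num_real.
    by move=> M M1 y /= ->; exact: ltW.
  apply: (@preimage_closed _ _ (fun x : 'rV[R]_d => `|x|) [set y | y = 1]).
    by move=> x _; exact: norm_continuous.
  exact: closed_eq.
have unit_in_S x : x != 0 -> S (`|x|^-1 *: x).
  by move=> x0; apply: normrZV; rewrite unitfE normr_eq0.
have [x0 Sx0 hmin] := compact_EVT_min (ex_intro _ _ (unit_in_S u u0)) Sc
  (@continuous_subspaceT _ _ S N nrm_continuous).
rewrite inE /S /= in Sx0.
have Nx0 : 0 < N x0.
  rewrite lt_neqAle nrm_ge0 andbT eq_sym; apply/eqP => /nrm_eq0 x00.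
  by move: Sx0; rewrite x00 normr0; lra.
exists (N x0) => // x; have [->|x0'] := eqVneq x 0; first by rewrite normr0 mulr0 nrm_ge0.
have hx : x = `|x| *: (`|x|^-1 *: x) by rewrite scalerA divff ?scale1r ?normr_eq0.
rewrite {2}hx nrmZ normr_id mulrC; apply: ler_wpM2l => //.
by apply: hmin; rewrite inE; exact: unit_in_S.
Qed.

End Norm.

Section Balls.
Variables (R : realType) (d : nat) (N : 'rV[R]_d -> R).
Hypothesis hN : is_norm N.

Lemma cball_center c (rho : R) : 0 <= rho -> cball N c rho c.
Proof. by rewrite /cball /= subrr (nrm0 hN). Qed.

Lemma cball_subset a b (s rho : R) : N (a - b) + s <= rho -> cball N a s `<=` cball N b rho.
Proof. by move=> h x; rewrite /cball /= => hx; have := nrm_triangle hN x a b; lra. Qed.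

(* Both endpoints [a +- s u] of a diameter lie in the larger ball. *)
Lemma cball_subset_radius (u : 'rV[R]_d) a b (s rho : R) : N u = 1 -> 0 <= s ->
  cball N a s `<=` cball N b rho -> s <= rho.
Proof.
move=> u1 s0 sub.
have end_in_ball (k : R) : `|k| = s -> N (a + k *: u - b) <= rho.
  by move=> ks; apply: sub; rewrite /cball /= addrAC subrr add0r nrmZ // u1 mulr1 ks.
have h1 := end_in_ball s (ger0_norm s0).
have h2 := end_in_ball (- s); rewrite normrN ger0_norm // in h2.
have := nrm_triangle hN (a + s *: u) b (a + (- s) *: u).
have -> : a + s *: u - (a + (- s) *: u) = (s + s) *: u.
  by rewrite scaleNr opprD opprK addrACA subrr add0r scalerDl.
rewrite nrmZ // u1 mulr1 (nrmB hN b) ger0_norm; last lra.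
by have := h2 erefl; lra.
Qed.

(* Take [m] at distance [s] from [z] towards [c] (or [m = z] if [c] is that close). *)
Lemma cball_in_both z c (s rho : R) : 0 <= s -> N (z - c) <= rho -> s + s <= rho ->
  exists m, cball N m s `<=` cball N z (s + s) /\ cball N m s `<=` cball N c rho.
Proof.
move=> s0 hz hs; have [hD|hD] := lerP (N (c - z)) s.
  exists z; split; apply: cball_subset; first by rewrite subrr (nrm0 hN); lra.
  by rewrite (nrmB hN); lra.
set D := N (c - z) in hD; have D0 : 0 < D by lra.
have sD0 : 0 <= s / D by rewrite divr_ge0 // ltW.
have sD : s / D <= 1 by rewrite ler_pdivrMr // mul1r ltW.
have DsD : D * (s / D) = s by rewrite mulrCA divff ?mulr1 ?gt_eqF.
exists (z + (s / D) *: (c - z)); split; apply: cball_subset.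
  by rewrite addrAC subrr add0r (nrmZ hN) (ger0_norm sD0) -/D mulrC DsD; lra.
have -> : z + (s / D) *: (c - z) - c = (1 - s / D) *: (z - c).
  by rewrite scalerBl scale1r -scalerN opprB addrAC.
rewrite (nrmZ hN) ger0_norm ?subr_ge0 // (nrmB hN) -/D mulrBl mul1r mulrC DsD.
by rewrite (nrmB hN) -/D in hz; lra.
Qed.

Lemma cball_closed c (rho : R) : closed (cball N c rho).
Proof.
have hc : continuous (fun x : 'rV[R]_d => N (x - c)).
  by apply: (continuous_nrmB hN) => [x|]; [exact: cvg_id | exact: cst_continuous].
apply: (@preimage_closed _ _ (fun x : 'rV[R]_d => N (x - c)) [set y | y <= rho]).
  by move=> x _; exact: hc.
exact: closed_le.
Qed.

Lemma cball_compact (u : 'rV[R]_d) c (rho : R) : u != 0 -> compact (cball N c rho).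
Proof.
move=> u0; have [m m0 hm] := nrm_ge_mx_norm hN u0.
apply: bounded_closed_compact; last exact: cball_closed.
exists (`|c| + rho / m); split; first by rewrite num_real.
move=> M hM x hx; apply: le_trans (ltW hM).
have : `|x - c| <= rho / m by rewrite ler_pdivlMr // mulrC (le_trans (hm _) hx).
by have := ler_normD (x - c) c; rewrite subrK; lra.
Qed.

End Balls.

Section DistanceToSet.
Variables (R : realType) (d : nat) (N : 'rV[R]_d -> R) (C : set 'rV[R]_d).
Hypotheses (hN : is_norm N) (cC : compact C) (C0 : C !=set0).

Lemma distC_attained z : exists2 e, C e & N (z - e) <= distC N C z.
Proof.
have hc : continuous (fun e : 'rV[R]_d => N (z - e)).
  by apply: (continuous_nrmB hN) => [|x]; [exact: cst_continuous | exact: cvg_id].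
have [e Ce hmin] := compact_EVT_min C0 cC (@continuous_subspaceT _ _ C _ hc).
rewrite inE in Ce; exists e => //.
apply: lb_le_inf; first by exists (N (z - e)), e.
by move=> _ [e' Ce' <-]; apply: hmin; rewrite inE.
Qed.

Lemma distC_le_hI B z : ballset N B z -> distC N C z <= hI N C B.
Proof.
move=> Bz; have [e0 Ce0] := C0.
have distC_le x : distC N C x <= N (x - e0).
  by apply: ge_inf; [exists 0 => _ [e _ <-]; exact: nrm_ge0 | exists e0].
apply: ub_le_sup; last by exists z.
exists (B.2 + N (B.1 - e0)) => _ [x Bx <-].
apply: le_trans (distC_le x) _; apply: le_trans (nrm_triangle hN x B.1 e0) _.
by rewrite lerD2r.
Qed.

Lemma near_point_of_ball B z : ballset N B z -> exists2 e, C e & N (z - e) <= hI N C B.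
Proof.
move=> Bz; have [e Ce he] := distC_attained z.
by exists e => //; apply: le_trans he (distC_le_hI Bz).
Qed.

Lemma difference_attained (w : 'rV[R]_d) :
  (forall eps, 0 < eps -> exists e1 e2, [/\ C e1, C e2 & N (e1 - e2 - w) <= eps]) ->
  exists e1 e2, [/\ C e1, C e2 & e1 - e2 = w].
Proof.
move=> happ; pose g (p : 'rV[R]_d * 'rV[R]_d) := N (p.1 - p.2 - w).
have gc : continuous g.
  by apply: (continuous_nrmB hN); [exact: sub_continuous | exact: cst_continuous].
have [e0 Ce0] := C0.
have [p Cp hmin] := compact_EVT_min (ex_intro _ (e0, e0) (conj Ce0 Ce0))
  (compact_setX cC cC) (@continuous_subspaceT _ _ _ _ gc).
rewrite inE in Cp; case: Cp => C1 C2.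
have gp0 : g p = 0.
  apply/eqP; rewrite eq_le nrm_ge0 // andbT leNgt; apply/negP => gp.
  have [e1 [e2 [Ce1 Ce2 he]]] := happ _ (divr_gt0 gp (ltr0n _ 2)).
  have : g p <= g (e1, e2) by apply: hmin; rewrite inE.
  by rewrite {2}/g /=; lra.
by exists p.1, p.2; split => //; apply/eqP; rewrite -subr_eq0 (nrm_eq0 hN gp0).
Qed.

End DistanceToSet.

Section Words.
Variable nch : seq nat -> nat.

Lemma valid_word_rcons I j :
  valid_word nch (rcons I j) -> valid_word nch I /\ (j < nch I)%N.
Proof.
move=> h; inversion h as [e|I0 j0 hv hj e]; first by move: e; case: (I) => [|? ?].
by case: (rcons_inj e) => <- <-.
Qed.

Lemma branch_exists (G : seq nat -> Prop) :
  G [::] -> (forall I, G I -> exists2 j, (j < nch I)%N & G (rcons I j)) ->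
  exists f : nat -> nat, (forall n, (f n < nch (mkseq f n))%N) /\ (forall n, G (mkseq f n)).
Proof.
move=> G0 step.
have [ch hch] : {ch : seq nat -> nat & forall I, G I -> (ch I < nch I)%N /\ G (rcons I (ch I))}.
  apply: (@choice _ _ (fun I j => G I -> (j < nch I)%N /\ G (rcons I j))) => I.
  have [gI|ngI] := pselect (G I); last by exists 0%N.
  by have [j hj gj] := step I gI; exists j.
pose g := fix g n := if n is k.+1 then rcons (g k) (ch (g k)) else [::].
have hg n : G (g n) by elim: n => //= n IH; exact: (hch _ IH).2.
have hm n : mkseq (fun k => ch (g k)) n = g n by elim: n => // n IH; rewrite mkseqS IH.
by exists (fun k => ch (g k)); split => n; rewrite hm //; exact: (hch _ (hg n)).1.
Qed.

End Words.

Section SystemOfBalls.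
Variables (R : realType) (d : nat) (N : 'rV[R]_d -> R) (C : set 'rV[R]_d).
Variables (S : seq nat -> 'rV[R]_d * R) (nch : seq nat -> nat).
Hypotheses (hN : is_norm N) (hS : system_of_balls N C S nch).

Lemma radius_gt0 I : valid_word nch I -> 0 < (S I).2.
Proof. by case: hS => + _ _ _; apply. Qed.

Lemma center_in_ball I : valid_word nch I -> ballset N (S I) (S I).1.
Proof. by move=> hI; apply: (cball_center hN); exact: ltW (radius_gt0 hI). Qed.

Lemma valid_word_cat I s : valid_word nch (I ++ s) ->
  valid_word nch I /\ ballset N (S (I ++ s)) `<=` ballset N (S I).
Proof.
case: hS => _ hsub _ _; elim/last_ind: s => [|s x IH]; first by rewrite cats0 => hI; split.
rewrite -rcons_cat => /valid_word_rcons [hv hx]; have [hI hs] := IH hv.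
by split => //; exact: subset_trans (hsub _ _ hv hx) hs.
Qed.

Lemma radius_le_of_subset (u : 'rV[R]_d) I c rho : N u = 1 -> valid_word nch I ->
  ballset N (S I) `<=` cball N c rho -> (S I).2 <= rho.
Proof. by move=> u1 hI; apply: (cball_subset_radius hN u1 (ltW (radius_gt0 hI))). Qed.

Lemma radius_le_root (u : 'rV[R]_d) I : N u = 1 -> valid_word nch I -> (S I).2 <= (S [::]).2.
Proof. by move=> u1 hI; apply: radius_le_of_subset u1 hI (valid_word_cat (I := [::]) hI).2. Qed.

Definition in_descendant y J n :=
  exists s, [/\ size s = n, valid_word nch (J ++ s) & ballset N (S (J ++ s)) y].

Lemma in_descendant_le y J n n' : (n <= n')%N -> in_descendant y J n' -> in_descendant y J n.
Proof.
move=> hn [s [hsz hv hy]]; rewrite -(cat_take_drop n s) catA in hv hy.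
have [hv' hsub] := valid_word_cat hv.
by exists (take n s); split => //; [rewrite size_takel ?hsz | exact: hsub].
Qed.

(* Koenig's lemma: [I] has only finitely many children. *)
Lemma in_descendant_child y I : (forall n, in_descendant y I n) ->
  exists2 j, (j < nch I)%N & forall n, in_descendant y (rcons I j) n.
Proof.
move=> hI; have [//|hno] := pselect (exists2 j, (j < nch I)%N &
  forall n, in_descendant y (rcons I j) n); exfalso.
have bad j : (j < nch I)%N -> exists n, ~ in_descendant y (rcons I j) n.
  by move=> hj; apply/existsNP => hall; apply: hno; exists j.
have [M hM] : exists M, forall j, (j < nch I)%N -> ~ in_descendant y (rcons I j) M.
  elim: (nch I) bad => [|k IH] hk; first by exists 0%N.
  have [M hM] := IH (fun j hj => hk j (ltnW hj)); have [n hn] := hk k (ltnSn k).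
  exists (maxn M n) => j; rewrite ltnS leq_eqVlt => /orP [/eqP ->|hj] he.
    by apply: hn; apply: in_descendant_le he; exact: leq_maxr.
  by apply: (hM j hj); apply: in_descendant_le he; exact: leq_maxl.
have [[|j0 s] [//= [hsz] hv hy]] := hI M.+1.
rewrite -cat_rcons in hv hy; have [/valid_word_rcons [_ hj0] _] := valid_word_cat hv.
by apply: (hM j0 hj0); exists s.
Qed.

Lemma ball_at_scale y eps : C y -> 0 < eps -> eps < (S [::]).2 ->
  exists V j, [/\ valid_word nch V, (j < nch V)%N, ballset N (S (rcons V j)) y,
                  eps < (S V).2 & (S (rcons V j)).2 <= eps].
Proof.
case: hS => _ _ hC hlim Cy eps0 epsR.
have root_desc n : in_descendant y [::] n.
  by move: Cy; rewrite hC => /(_ n I) [J [hJ hsz] hyJ]; exists J.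
have [f [hf hG]] := branch_exists root_desc (fun I gI => in_descendant_child gI).
have small : exists n, (S (mkseq f n)).2 <= eps.
  have [n hn] := filter_ex (@cvgr_dist_le _ _ _ _ _ _ 0 (hlim f hf) _ eps0).
  by exists n; rewrite sub0r normrN in hn; exact: le_trans (ler_norm _) hn.
case: (ex_minnP small) => -[hk _|k hk hmin]; first by move: hk; rewrite /=; lra.
have [s0 [/size0nil -> hv0 _]] := hG k 0%N.
have [s1 [/size0nil -> hv1 hy1]] := hG k.+1 0%N.
rewrite cats0 in hv0; rewrite cats0 mkseqS in hv1 hy1; rewrite mkseqS in hk.
exists (mkseq f k), (f k); split => //.
by rewrite ltNge; apply/negP => /hmin; rewrite ltnn.
Qed.

End SystemOfBalls.

Section ThickDenseSystem.
Variables (R : realType) (d : nat) (N : 'rV[R]_d -> R) (C : set 'rV[R]_d).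
Variables (S : seq nat -> 'rV[R]_d * R) (nch : seq nat -> nat) (r : R) (v : 'rV[R]_d).
Hypotheses (hN : is_norm N) (hS : system_of_balls N C S nch) (cC : compact C).
Hypotheses (r_gt0 : 0 < r) (r_lt_half : 2 * r < 1) (hv : N v = 1).
Hypotheses (thick : thickness_ge N C S nch (1 - 2 * r)^-1) (dense : uniformly_dense N S nch r).

Lemma hI_le_child I j : valid_word nch I -> (j < nch I)%N ->
  hI N C (S I) <= (1 - 2 * r) * (S (rcons I j)).2.
Proof.
move=> hI hj; have := thick hI hj.
have h12 : 0 < 1 - 2 * r by have := r_lt_half; lra.
by rewrite -ler_pdivlMl ?invr_gt0 // invrK.
Qed.

Lemma hI_le_radius I : valid_word nch I -> hI N C (S I) <= (1 - 2 * r) * (r * (S I).2).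
Proof.
move=> hI; have rho0 := radius_gt0 hS hI; have s0 : 0 < r * (S I).2 by rewrite mulr_gt0.
have sub : cball N (S I).1 (r * (S I).2) `<=` ballset N (S I).
  apply: (cball_subset hN); rewrite subrr (nrm0 hN) add0r ler_piMl ?ltW //.
  by have := r_lt_half; lra.
have [j hj hIj] := @dense I ((S I).1, r * (S I).2) hI s0 sub (lexx _).
apply: le_trans (hI_le_child hI hj) _; rewrite ler_wpM2l //; first by have := r_lt_half; lra.
exact: (radius_le_of_subset hN hS (c := (S I).1) hv (valid_rcons hI hj) hIj).
Qed.

(* Nested balls along an infinite branch meet, by compactness of the root ball. *)
Lemma system_nonempty : C !=set0.
Proof.
have v0 : v != 0.
  by apply/eqP => v0; move: hv; rewrite v0 (nrm0 hN) => /eqP; rewrite eq_sym oner_eq0.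
have child I : valid_word nch I -> exists2 j, (j < nch I)%N & valid_word nch (rcons I j).
  move=> hI; have rho0 := radius_gt0 hS hI; have r_le1 : r <= 1 by have := r_lt_half; lra.
  have [j hj _] := dense hI rho0 (@subset_refl _ _) (ler_piMl (ltW rho0) r_le1).
  by exists j => //; exact: valid_rcons.
have [f [hf fvalid]] := branch_exists (valid_nil nch) child.
have nest n k : ballset N (S (mkseq f (n + k))) `<=` ballset N (S (mkseq f n)).
  elim: k => [|k IH]; first by rewrite addn0.
  rewrite addnS mkseqS; apply: subset_trans IH.
  by case: hS => _ hsub _ _; exact: hsub (fvalid _) (hf _).
pose c n := (S (mkseq f n)).1.
have hc n : ballset N (S (mkseq f n)) (c n).
  by move: (center_in_ball hN hS (fvalid n)).
have root_ball : (c @ \oo) (ballset N (S [::])).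
  by exists 0%N => // n _; apply: (nest 0%N n); rewrite add0n; exact: hc.
have [z [_ clz]] := cball_compact hN (c := (S [::]).1) (rho := (S [::]).2) v0 _ root_ball.
exists z; case: hS => _ _ -> _ n _; exists (mkseq f n); first by split; rewrite ?size_mkseq.
rewrite clusterE in clz; have := clz (ballset N (S (mkseq f n))).
rewrite -(closure_id _).1; last exact: cball_closed.
apply; exists n => // m /= hm.
by have := nest n (m - n)%N; rewrite subnKC //; apply; exact: hc.
Qed.

Variable t : R.

Definition good_triple P y w := [/\ valid_word nch P, C y,
  w = t *: v \/ w = - (t *: v) & N (y + w - (S P).1) <= (1 - 2 * r) * (S P).2].

Lemma good_triple_root : 0 <= t -> t <= (1 - 2 * r) * (1 - r) * (S [::]).2 ->
  exists y, good_triple [::] y (t *: v).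
Proof.
move=> t0 ta; have [y Cy hy] := near_point_of_ball hN cC system_nonempty
  (center_in_ball hN hS (valid_nil nch)).
exists y; split; [exact: valid_nil | done | by left | ].
have -> : y + t *: v - (S [::]).1 = - ((S [::]).1 - y) + t *: v by rewrite opprB addrAC.
apply: le_trans (nrmD hN _ _) _; rewrite (nrmN hN) (nrmZ hN) hv mulr1 ger0_norm //.
have := hI_le_radius (valid_nil nch); have := r_gt0; move: hy ta; nra.
Qed.

Lemma good_triple_step P y w : good_triple P y w ->
  exists P' y' w', good_triple P' y' w' /\ (S P').2 <= 2 * r * (S P).2.
Proof.
case=> hP Cy hw; set c := (S P).1; set rho := (S P).2; set z := y + w => hz.
have rho0 : 0 < rho := radius_gt0 hS hP.
set s := r * rho; have s0 : 0 < s by rewrite mulr_gt0.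
have -> : 2 * r * rho = s + s by rewrite /s; ring.
have rho_split : (1 - 2 * r) * rho + (s + s) = rho by rewrite /s; ring.
have two_s : s + s < rho.
  have : 0 < (1 - 2 * r) * rho by rewrite mulr_gt0 //; have := r_lt_half; lra.
  lra.
have z_ball : cball N z (s + s) `<=` ballset N (S P) by apply: (cball_subset hN); lra.
have [V [j [hV hj yVj sV sVj]]] :=
  ball_at_scale hS Cy (addr_gt0 s0 s0) (lt_le_trans two_s (radius_le_root hN hS hv hP)).
have hVj := valid_rcons hV hj.
set rho1 := (S (rcons V j)).2 in sVj *; set c1 := (S (rcons V j)).1 in yVj.
have [hP_small|hP_large] := lerP (hI N C (S P)) ((1 - 2 * r) * rho1).
  have q_ball : ballset N (S P) (c1 + w).
    apply: z_ball; rewrite /cball /= /z opprD addrACA subrr addr0 (nrmB hN).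
    by move: yVj; rewrite /ballset /cball /= -/rho1; lra.
  have [x Cx hx] := near_point_of_ball hN cC system_nonempty q_ball.
  exists (rcons V j), x, (- w); split; last lra.
  split => //; first by case: hw => ->; [right | left; rewrite opprK].
  have -> : x - w - c1 = - (c1 + w - x) by rewrite opprB opprD addrA addrAC.
  by rewrite (nrmN hN); exact: le_trans hx hP_small.
have zV : N (z - ((S V).1 + w)) <= (S V).2.
  rewrite /z opprD addrACA subrr addr0.
  by case: hS => _ hsub _ _; exact: hsub _ _ hV hj y yVj.
have [m [m_z m_V]] := cball_in_both hN (ltW s0) zV (ltW sV).
have [j' hj' Pj'_m] := @dense P (m, s) hP s0 (subset_trans m_z z_ball) (lexx _).
have hPj' := valid_rcons hP hj'.
set c2 := (S (rcons P j')).1.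
have c2V : ballset N (S V) (c2 - w).
  rewrite /ballset /cball /= -addrA -opprD [w + _]addrC.
  exact: m_V (Pj'_m _ (center_in_ball hN hS hPj')).
have [y2 Cy2 hy2] := near_point_of_ball hN cC system_nonempty c2V.
exists (rcons P j'), y2, w; split; first split => //.
  have -> : y2 + w - c2 = - (c2 - w - y2) by rewrite opprB opprB addrA.
  rewrite (nrmN hN); apply: le_trans hy2 _; apply: le_trans (hI_le_child hV hj) _.
  exact: le_trans (ltW hP_large) (hI_le_child hP hj').
have /= := radius_le_of_subset hN hS (c := m) hv hPj' Pj'_m; lra.
Qed.

Hypotheses (t_ge0 : 0 <= t) (t_le : t <= (1 - 2 * r) * (1 - r) * (S [::]).2).

Lemma good_triple_small k :
  exists P y w, good_triple P y w /\ (S P).2 <= (2 * r) ^+ k * (S [::]).2.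
Proof.
elim: k => [|k [P [y [w [hPyw hk]]]]].
  by have [y hy] := good_triple_root t_ge0 t_le; exists [::], y, (t *: v); rewrite expr0 mul1r.
have [P' [y' [w' [hP' hrad]]]] := good_triple_step hPyw.
exists P', y', w'; split => //; apply: le_trans hrad _.
rewrite exprS -[X in _ <= X]mulrA; apply: ler_wpM2l hk; have := r_gt0; lra.
Qed.

Lemma approx_difference eps : 0 < eps ->
  exists e1 e2, [/\ C e1, C e2 & N (e1 - e2 - t *: v) <= eps].
Proof.
move=> eps0; have rho0 := radius_gt0 hS (valid_nil nch).
have [k hk] : exists k, (2 * r) ^+ k * (S [::]).2 <= eps.
  have r2_lt1 : `|2 * r| < 1 by rewrite ger0_norm; have := r_gt0; have := r_lt_half; lra.
  have [k hk] := filter_ex (@cvgr_dist_le _ _ _ _ _ _ 0 (cvg_expr r2_lt1) _ (divr_gt0 eps0 rho0)).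
  exists k; rewrite -ler_pdivlMr // ; rewrite sub0r normrN /= in hk.
  exact: le_trans (ler_norm _) hk.
have [P [y [w [[hP Cy hw hyw] hrad]]]] := good_triple_small k.
have rP := radius_gt0 hS hP; have r_le1 : r <= 1 by have := r_lt_half; lra.
have yw_ball : ballset N (S P) (y + w).
  apply: le_trans hyw (ler_piMl (ltW rP) _); have := r_gt0; lra.
have [e Ce he] := near_point_of_ball hN cC system_nonempty yw_ball.
have {}he : N (y + w - e) <= eps.
  apply: le_trans he (le_trans (hI_le_radius hP) _); apply: le_trans hk.
  have r_rho : r * (S P).2 <= (S P).2 := ler_piMl (ltW rP) r_le1.
  have : (1 - 2 * r) * (r * (S P).2) <= r * (S P).2.
    by apply: ler_piMl; [rewrite mulr_ge0 ?ltW | have := r_gt0; lra].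
  lra.
case: hw => hw; rewrite hw in he.
  exists e, y; split => //.
  have -> : e - y - t *: v = - (y + t *: v - e) by rewrite opprB opprD addrA.
  by rewrite (nrmN hN).
by exists y, e; split => //; rewrite addrAC.
Qed.

Lemma mem_Delta : Delta C v t.
Proof. exact: (difference_attained hN cC system_nonempty approx_difference). Qed.

End ThickDenseSystem.

Unset Implicit Arguments. Set Strict Implicit.

Theorem corollary4p4 (R : realType) (d : nat) (N : 'rV[R]_d -> R) :
  is_norm N ->
  forall (r R0 : R), 0 < r -> r <= 3^-1 -> 0 < R0 ->
  exists2 a : R, 0 < a &
    forall (C : set 'rV[R]_d) (S : seq nat -> 'rV[R]_d * R) (nch : seq nat -> nat),
      compact C ->
      system_of_balls N C S nch ->
      (S [::]).2 = R0 ->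
      thickness_ge N C S nch (1 - 2 * r)^-1 ->
      uniformly_dense N S nch r ->
      forall v : 'rV[R]_d, N v = 1 ->
        `[0, a] `<=` Delta C v.
Proof.
move=> hN r R0 r_gt0 r_le3 R0_gt0; have r_lt_half : 2 * r < 1 by lra.
exists ((1 - 2 * r) * (1 - r) * R0); first by rewrite !mulr_gt0 //; lra.
move=> C S nch cC hS root thick dense v hv t; rewrite /= in_itv /= => /andP [t_ge0 t_le].
by apply: (mem_Delta hN hS cC r_gt0 r_lt_half hv thick dense t_ge0); rewrite root.
Qed.
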